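(* Let $q$ be a prime power, let $k \ge 2$, let $0 < \varepsilon < 1$, let $\eta \ge 600$, and let $\mathcal{C} \subseteq \mathbb{F}_q^n$ be a linear code of dimension $k$. Let $b \ge 1$ be an integer such that every nonzero codeword of $\mathcal{C}$ has weight at least $b$, and such that for every integer $\alpha \ge 1$ the number of codewords of weight at most $\alpha b$ is at most $(qk)^{\alpha}$. Let $p = \frac{\eta \log_2(k)\log_2(q)}{b \varepsilon^2}$ and assume $p \le 1$. Sample each coordinate $i \in [n]$ independently with probability $p$, and give each sampled coordinate weight $1/p$; let $S$ be the set of sampled coordinates. Then with probability at least $1 - 2^{-(0.19\eta - 110)\log_2 k} \cdot k^{-101}$, for every $c \in \mathcal{C}$, $$(1-\varepsilon)\mathrm{wt}(c) \le \tfrac{1}{p} \,\mathrm{wt}(c|_S) \le (1+\varepsilon)\mathrm{wt}(c).$$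
   Context: $\mathrm{wt}(c)$ is the number of nonzero coordinates of $c$, and $c|_S=(c_i)_{i\in S}$. *)

From HB Require Import structures.
From mathcomp Require Import all_boot all_order all_algebra all_field.
From mathcomp Require Import reals exp.
Set Implicit Arguments. Unset Strict Implicit. Unset Printing Implicit Defensive.
Import Order.TTheory GRing.Theory Num.Theory.
Local Open Scope ring_scope.

Definition wt (F : finFieldType) (n : nat) (c : 'rV[F]_n) : nat :=
  #|[set i : 'I_n | c 0 i != 0]|.

Definition wt_on (F : finFieldType) (n : nat) (S : {set 'I_n}) (c : 'rV[F]_n) : nat :=
  #|[set i in S | c 0 i != 0]|.

(* Probability that the random set S (each i in [n] independently with
   probability p) satisfies E. *)
Definition sample_prob (R : realType) (n : nat) (p : R) (E : pred {set 'I_n}) : R :=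
  \sum_(S : {set 'I_n} | E S) p ^+ #|S| * (1 - p) ^+ (n - #|S|).

Definition log2 (R : realType) (x : R) : R := ln x / ln 2.

From HB Require Import structures.
From mathcomp Require Import all_boot all_order all_algebra all_field.
From mathcomp Require Import reals sequences exp lra ring.
Set Implicit Arguments. Unset Strict Implicit. Unset Printing Implicit Defensive.
Import Order.TTheory GRing.Theory Num.Theory.
Local Open Scope ring_scope.

(* A Chernoff bound makes the rescaled weight of a fixed codeword of weight w
   fail to be (1 +- eps)-accurate with probability at most 2 exp(-p w eps^2/6),
   which is at most 2 r^(w/b) with r = exp(-p b eps^2/6) = exp(-eta log2 k log2 q/6).
   Grouping the codewords by the level j = floor(wt/b) >= 1, level j holds at most
   (qk)^(j+1) codewords, so the union bound gives at most
   2 qk sum_j (qk r)^j <= 4 (qk)^2 r, and the choice eta >= 600 makes qk r tiny. *)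

Section ExpBounds.
Variable R : realType.
Implicit Types t : R.

Lemma expRN_le_quadratic t : 0 <= t -> expR (- t) <= 1 - t + t ^+ 2.
Proof.
move=> t_ge0; have := expR_ge1Dx t; have := expRxMexpNx_1 t.
have := expR_gt0 (- t); have : 0 <= t ^+ 3 by rewrite exprn_ge0.
rewrite !exprS expr0 !mulr1; nra.
Qed.

Lemma expR_le_quadratic t : 0 <= t <= 1/3 -> expR t <= 1 + t + 3/2 * t ^+ 2.
Proof.
case/andP=> t_ge0 t_le; have := expR_ge1Dx (- t); have := expRxMexpNx_1 t.
have := expR_gt0 t; have : 0 <= t ^+ 2 * (1 - 3 * t).
  by rewrite mulr_ge0 ?exprn_ge0 //; lra.
rewrite expr2; nra.
Qed.

Lemma expRN_le_expr_div t (w b : nat) : 0 <= t ->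
  expR (- (t * w%:R)) <= expR (- (t * b%:R)) ^+ (w %/ b).
Proof.
move=> t_ge0; rewrite -expRM_natr ler_expR mulNr lerN2 -mulrA ler_wpM2l //.
by rewrite -natrM ler_nat mulnC leq_divM.
Qed.

End ExpBounds.

Definition rescaled_close {R : realType} (p e : R) (m w : nat) : bool :=
  ((1 - e) * w%:R <= m%:R / p) && (m%:R / p <= (1 + e) * w%:R).

Section Sampling.
Variables (R : realType) (n : nat) (p : R).

Definition sample_weight (S : {set 'I_n}) : R := p ^+ #|S| * (1 - p) ^+ (n - #|S|).

Lemma eq_sample_prob (E1 E2 : pred {set 'I_n}) :
  E1 =1 E2 -> sample_prob p E1 = sample_prob p E2.
Proof. by move=> eqE; apply: eq_bigl. Qed.

Lemma sum_sample_weight_prod (f : 'I_n -> R) :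
  \sum_S sample_weight S * \prod_(i in S) f i = \prod_i (p * f i + (1 - p)).
Proof.
rewrite bigA_distr; apply: eq_bigr => S _.
rewrite [RHS](bigID (mem S)) /=.
rewrite [X in _ = X * _](eq_bigr (fun i => p * f i)); last by move=> i ->.
rewrite [X in _ = _ * X](eq_bigr (fun i => 1 - p)); last by move=> i /negbTE ->.
rewrite big_split /= !prodr_const /sample_weight.
have -> : #|[pred i | i \notin S]| = (n - #|S|)%N.
  have cardS := cardC (mem S); rewrite card_ord in cardS.
  by rewrite -[X in (X - _)%N]cardS addKn.
by rewrite mulrAC -!mulrA.
Qed.

Lemma sum_sample_weight_exp_card (A : {set 'I_n}) (z : R) :
  \sum_S sample_weight S * z ^+ #|S :&: A| = (p * z + (1 - p)) ^+ #|A|.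
Proof.
have -> : (p * z + (1 - p)) ^+ #|A| =
    \prod_i (p * (if i \in A then z else 1) + (1 - p)).
  rewrite (bigID (mem A)) /= [X in _ = _ * X]big1 => [|i /negbTE ->]; last first.
    by rewrite mulr1 addrC subrK.
  by rewrite mulr1 -prodr_const; apply: eq_bigr => i ->.
rewrite -sum_sample_weight_prod; apply: eq_bigr => S _.
rewrite -big_mkcondr prodr_const /=.
by congr (_ * _ ^+ _); apply: eq_card => i; rewrite !inE.
Qed.

Lemma sum_sample_weight : \sum_S sample_weight S = 1.
Proof.
have := sum_sample_weight_exp_card set0 1.
rewrite cards0 expr0 => <-; apply: eq_bigr => S _.
by rewrite expr1n mulr1.
Qed.

Hypotheses (p_ge0 : 0 <= p) (p_le1 : p <= 1).

Lemma sample_weight_ge0 S : 0 <= sample_weight S.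
Proof. by rewrite mulr_ge0 // exprn_ge0 // subr_ge0. Qed.

Lemma sample_probC (E : pred {set 'I_n}) :
  sample_prob p E = 1 - sample_prob p (predC E).
Proof. by rewrite -sum_sample_weight (bigID E) /= addrK. Qed.

Lemma sample_prob_le_expectation (E : pred {set 'I_n}) (g : {set 'I_n} -> R) :
  (forall S, 0 <= g S) -> (forall S, E S -> 1 <= g S) ->
  sample_prob p E <= \sum_S sample_weight S * g S.
Proof.
move=> g_ge0 g_ge1; rewrite [X in _ <= X](bigID E) /=.
apply: ler_wpDr; first by apply: sumr_ge0 => S _; rewrite mulr_ge0 ?sample_weight_ge0.
apply: ler_sum => S ES; rewrite -[X in X <= _]mulr1.
by rewrite ler_wpM2l ?sample_weight_ge0 ?g_ge1.
Qed.

Lemma sample_prob_union_le (T : finType) (P : pred T)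
    (Ec : T -> pred {set 'I_n}) (E : pred {set 'I_n}) :
  (forall S, E S -> exists2 c, P c & Ec c S) ->
  sample_prob p E <= \sum_(c | P c) sample_prob p (Ec c).
Proof.
move=> E_cover.
apply: (le_trans (@sample_prob_le_expectation E
  (fun S => \sum_(c | P c) (Ec c S)%:R) _ _)).
- by move=> S; apply: sumr_ge0 => c _; exact: ler0n.
- move=> S /E_cover[c Pc EcS]; rewrite (bigD1 c) //= EcS.
  by rewrite lerDl sumr_ge0.
under eq_bigr do rewrite big_distrr /=.
rewrite exchange_big /=; apply: ler_sum => c _.
rewrite /sample_prob [X in _ <= X]big_mkcond /=; apply: ler_sum => S _.
by case: (Ec c S); rewrite ?mulr1 ?mulr0.
Qed.

Lemma sample_prob_le_mgf (A : {set 'I_n}) (E : pred {set 'I_n}) (z a : R) :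
  0 <= z -> 0 <= a -> (forall S, E S -> 1 <= a * z ^+ #|S :&: A|) ->
  sample_prob p E <= a * expR (p * (z - 1) * #|A|%:R).
Proof.
move=> z_ge0 a_ge0 E_ge1.
apply: (le_trans (@sample_prob_le_expectation E
  (fun S => a * z ^+ #|S :&: A|) _ E_ge1)).
  by move=> S; rewrite mulr_ge0 ?exprn_ge0.
under eq_bigr do rewrite mulrCA.
rewrite -big_distrr /= sum_sample_weight_exp_card ler_wpM2l //.
have mgf_ge0 : 0 <= p * z + (1 - p) by rewrite addr_ge0 ?mulr_ge0 ?subr_ge0.
rewrite expRM_natr lerXn2r ?nnegrE ?expR_ge0 //.
by have := expR_ge1Dx (p * (z - 1)); rewrite mulrBr mulr1 addrCA addrC.
Qed.

Lemma sample_prob_orb_le (E1 E2 : pred {set 'I_n}) :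
  sample_prob p (fun S => E1 S || E2 S) <= sample_prob p E1 + sample_prob p E2.
Proof.
apply: (le_trans (@sample_prob_union_le _ xpredT
  (fun b : bool => if b then E1 else E2) _ _)); last by rewrite big_bool.
by move=> S /orP[E1S|E2S]; [exists true | exists false].
Qed.

End Sampling.

Section Chernoff.
Variables (R : realType) (n : nat) (p : R).
Hypotheses (p_gt0 : 0 < p) (p_le1 : p <= 1).
Let p_ge0 : 0 <= p := ltW p_gt0.

Lemma sample_prob_card_lt (A : {set 'I_n}) (e : R) : 0 <= e ->
  sample_prob p (fun S => #|S :&: A|%:R / p < (1 - e) * #|A|%:R)
  <= expR (- (p * #|A|%:R * e ^+ 2 / 4)).
Proof.
move=> e_ge0; set w : R := #|A|%:R.
have w_ge0 : 0 <= w by rewrite ler0n.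
apply: (le_trans (@sample_prob_le_mgf _ _ _ p_ge0 p_le1 A _ (expR (- (e / 2)))
  (expR (e / 2 * ((1 - e) * p * w))) (expR_ge0 _) (expR_ge0 _) _)).
  move=> S; rewrite ltr_pdivrMr // -expRM_natr -expRD -[X in X <= _]expR0.
  by rewrite ler_expR mulNr -mulrBr => lt_X; rewrite mulr_ge0 //; lra.
rewrite -expRD ler_expR.
have := @expRN_le_quadratic R (e / 2) ltac:(lra).
have : 0 <= p * w by rewrite mulr_ge0 // ltW.
rewrite expr2; nra.
Qed.

Lemma sample_prob_card_gt (A : {set 'I_n}) (e : R) : 0 <= e <= 1 ->
  sample_prob p (fun S => (1 + e) * #|A|%:R < #|S :&: A|%:R / p)
  <= expR (- (p * #|A|%:R * e ^+ 2 / 6)).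
Proof.
case/andP=> e_ge0 e_le1; set w : R := #|A|%:R.
have w_ge0 : 0 <= w by rewrite ler0n.
apply: (le_trans (@sample_prob_le_mgf _ _ _ p_ge0 p_le1 A _ (expR (e / 3))
  (expR (- (e / 3 * ((1 + e) * p * w)))) (expR_ge0 _) (expR_ge0 _) _)).
  move=> S; rewrite ltr_pdivlMr // -expRM_natr -expRD -[X in X <= _]expR0.
  by rewrite ler_expR addrC -mulrN -mulrDr => lt_X; rewrite mulr_ge0 //; lra.
rewrite -expRD ler_expR.
have := @expR_le_quadratic R (e / 3) ltac:(apply/andP; split; lra).
have : 0 <= p * w by rewrite mulr_ge0 // ltW.
rewrite expr2; nra.
Qed.

Lemma sample_prob_card_deviation (A : {set 'I_n}) (e : R) : 0 <= e <= 1 ->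
  sample_prob p (fun S => ~~ rescaled_close p e #|S :&: A| #|A|)
  <= 2 * expR (- (p * #|A|%:R * e ^+ 2 / 6)).
Proof.
move=> /andP[e_ge0 e_le1].
rewrite (@eq_sample_prob _ _ p _ (fun S => (#|S :&: A|%:R / p < (1 - e) * #|A|%:R)
    || ((1 + e) * #|A|%:R < #|S :&: A|%:R / p))); last first.
  by move=> S; rewrite negb_and -!ltNge.
apply: (le_trans (sample_prob_orb_le p_ge0 p_le1 _ _)); rewrite mulr_natl mulr2n.
apply: lerD; last by apply: sample_prob_card_gt; rewrite e_ge0.
apply: (le_trans (@sample_prob_card_lt A e e_ge0)); rewrite ler_expR.
have : 0 <= p * #|A|%:R * e ^+ 2 by rewrite !mulr_ge0 ?exprn_ge0 // ltW.
lra.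
Qed.

End Chernoff.

Lemma geometric_sum_le (R : realType) (r : R) N : 0 <= r <= 1/2 ->
  \sum_(j < N) r ^+ j.+1 <= 2 * r.
Proof.
case/andP=> r_ge0 r_le.
suff : \sum_(j < N) r ^+ j.+1 <= 2 * r - 2 * r ^+ N.+1.
  by move/le_trans; apply; rewrite lerBlDr lerDl mulr_ge0 ?exprn_ge0.
elim: N => [|N IH]; first by rewrite big_ord0 expr1 subrr.
rewrite big_ord_recr /= (exprS _ N.+1); have : 0 <= r ^+ N.+1 by rewrite exprn_ge0.
nra.
Qed.

Lemma sum_expr_level_le (R : realType) (T : finType) (P : pred T)
    (w : T -> nat) (b m : nat) (r : R) :
  (0 < b)%N -> 0 <= r -> m%:R * r <= 1/2 ->
  (forall alpha, (1 <= alpha)%N ->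
     (#|[set c | P c && (w c <= alpha * b)%N]| <= m ^ alpha)%N) ->
  \sum_(c | P c && (b <= w c)%N) r ^+ (w c %/ b) <= 2 * m%:R ^+ 2 * r.
Proof.
move=> b_gt0 r_ge0 mr_le count_le.
set N := \max_c w c.
(* Every summed c has level w c %/ b >= 1; the level j.+1 is indexed by j. *)
have lvl_lt c : ((w c %/ b).-1 < N.+1)%N.
  by rewrite ltnS (leq_trans (leq_pred _)) // (leq_trans (leq_div _ _)) ?leq_bigmax.
rewrite (partition_big (fun c => inord (w c %/ b).-1 : 'I_N.+1) xpredT) //=.
have level_le (j : 'I_N.+1) :
    \sum_(c | P c && (b <= w c)%N && (inord (w c %/ b).-1 == j)) r ^+ (w c %/ b)
    <= m%:R * (m%:R * r) ^+ j.+1.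
  have lvlE c : (b <= w c)%N -> inord (w c %/ b).-1 = j -> (w c %/ b = j.+1)%N.
    by move=> b_le <-; rewrite inordK // prednK // divn_gt0.
  rewrite (eq_bigr (fun _ => r ^+ j.+1)); last first.
    by move=> c /andP[/andP[_ b_le] /eqP/(lvlE c b_le) ->].
  rewrite sumr_const -[X in X <= _]mulr_natr exprMn mulrA -exprS [leRHS]mulrC.
  rewrite ler_wpM2l ?exprn_ge0 //.
  rewrite -natrX ler_nat (leq_trans _ (count_le j.+2 isT)) //.
  apply: subset_leq_card; apply/subsetP => c; rewrite !inE.
  case/andP=> /andP[Pc b_le] /eqP/(lvlE c b_le) lvl; rewrite Pc /=.
  by rewrite -lvl ltnW // ltn_ceil.
apply: (le_trans (ler_sum _ (fun j _ => level_le j))).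
rewrite -big_distrr /= expr2 -!mulrA mulrCA ler_wpM2l //.
by apply: geometric_sum_le; rewrite mr_le mulr_ge0.
Qed.

Section Weight.
Variables (F : finFieldType) (n : nat).
Implicit Types (c : 'rV[F]_n) (S : {set 'I_n}).

Definition supp c : {set 'I_n} := [set i | c 0 i != 0].

Lemma wt_onE S c : wt_on S c = #|S :&: supp c|.
Proof. by apply: eq_card => i; rewrite !inE. Qed.

Lemma wt_on_le_wt S c : (wt_on S c <= wt c)%N.
Proof. by rewrite wt_onE subset_leq_card // subsetIr. Qed.

Lemma wt0 : wt (0 : 'rV[F]_n) = 0%N.
Proof. by apply: eq_card0 => i; rewrite !inE mxE eqxx. Qed.

Variables (R : realType) (p : R).
Hypotheses (p_gt0 : 0 < p) (p_le1 : p <= 1).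

Lemma rescaled_close_wt0 (e : R) S c : wt c = 0%N ->
  rescaled_close p e (wt_on S c) (wt c).
Proof.
move=> wt_c0; have := wt_on_le_wt S c; rewrite wt_c0 leqn0 => /eqP ->.
by rewrite /rescaled_close !mulr0 mul0r lexx.
Qed.

Lemma sample_prob_wt_deviation (e : R) c : 0 <= e <= 1 ->
  sample_prob p (fun S => ~~ rescaled_close p e (wt_on S c) (wt c))
  <= 2 * expR (- (p * (wt c)%:R * e ^+ 2 / 6)).
Proof.
move=> e01; rewrite (@eq_sample_prob _ _ _ _
  (fun S => ~~ rescaled_close p e #|S :&: supp c| #|supp c|)); last first.
  by move=> S; rewrite wt_onE.
exact: (sample_prob_card_deviation p_gt0 p_le1 (supp c) e01).
Qed.

Lemma sample_prob_code_deviation (P : pred 'rV[F]_n) (b : nat) (e : R) :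
  0 <= e <= 1 -> (forall c, P c -> c != 0 -> (b <= wt c)%N) ->
  sample_prob p (predC (fun S => [forall c, P c ==> rescaled_close p e (wt_on S c) (wt c)]))
  <= \sum_(c | P c && (b <= wt c)%N) 2 * expR (- (p * (wt c)%:R * e ^+ 2 / 6)).
Proof.
move=> e01 min_wt.
apply: (le_trans (@sample_prob_union_le _ _ _ (ltW p_gt0) p_le1 _
  (fun c => P c && (b <= wt c)%N)
  (fun c S => ~~ rescaled_close p e (wt_on S c) (wt c)) _ _)).
  move=> S /forallPn[c]; rewrite negb_imply => /andP[Pc far]; exists c => //.
  rewrite Pc min_wt //; apply: contraNneq far => ->.
  exact: rescaled_close_wt0 wt0.
by apply: ler_sum => c _; exact: sample_prob_wt_deviation.
Qed.

End Weight.

Section Log2.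
Variable R : realType.

Lemma ln2_gt0 : 0 < ln (2 : R).
Proof. by rewrite ln_gt0 // ltr1n. Qed.

Lemma ln2_le : ln (2 : R) <= 17/20.
Proof.
have sq : expR (17/20 : R) = expR (17/40) ^+ 2.
  by rewrite -expRM_natr; congr expR; lra.
have : 2 <= expR (17/20 : R).
  rewrite sq expr2; have := expR_ge1Dx (17/40 : R); nra.
by move=> two_le; rewrite -[leRHS]expRK ler_ln ?posrE ?expR_gt0.
Qed.

Lemma log2_ge1 (m : nat) : (2 <= m)%N -> 1 <= log2 (m%:R : R).
Proof.
move=> m_ge2; rewrite /log2 ler_pdivlMr ?ln2_gt0 // mul1r.
by rewrite ler_ln ?posrE ?ler_nat // ltr0n (leq_trans _ m_ge2).
Qed.

Lemma natr_expR_log2 (m : nat) : (0 < m)%N -> m%:R = expR (log2 (m%:R : R) * ln 2).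
Proof.
by move=> m_gt0; rewrite /log2 divfK ?gt_eqF ?ln2_gt0 // lnK // posrE ltr0n.
Qed.

End Log2.

(* Any upper bound on l = ln 2 up to 50/57 works: it gives 19/100 * l <= 1/6. *)
Lemma tail_exponents_le (R : realFieldType) (l K L eta : R) :
  0 < l <= 17/20 -> 1 <= K -> 1 <= L -> 600 <= eta ->
  l * (L + K) - eta * (K * L) / 6 <= - l /\
  (l + l * (L + K)) * 2 - eta * (K * L) / 6
    <= - (19/100 * eta - 110) * K * l - K * l * 101.
Proof.
case/andP=> l_gt0 l_le K_ge1 L_ge1 eta_ge.
have KL_ge1 : 1 <= K * L by nra.
have KL_ge : L + K <= 2 * (K * L) by nra.
have : 0 <= (eta / 6 - 4 * l) * (K * L - K) by rewrite mulr_ge0 //; nra.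
have : 0 <= eta * K * (1 / 6 - 19 / 100 * l) by rewrite mulr_ge0 //; nra.
have : 0 <= l * (K - 1) by rewrite mulr_ge0 //; lra.
have : l * (L + K) <= l * (2 * (K * L)) by rewrite ler_wpM2l // ltW.
have : 600 * (K * L) <= eta * (K * L) by rewrite ler_wpM2r //; lra.
split; nra.
Qed.

Lemma code_tail_le (R : realType) (q k : nat) (eta : R) :
  (2 <= q)%N -> (2 <= k)%N -> 600 <= eta ->
  let r := expR (- (eta * (log2 (k%:R : R) * log2 (q%:R : R)) / 6)) in
  (q * k)%:R * r <= 1 / 2 /\
  2 * (2 * (q * k)%:R ^+ 2 * r)
    <= powR 2 (- (19/100 * eta - 110) * log2 (k%:R : R)) * k%:R ^- 101.
Proof.
move=> q_ge2 k_ge2 eta_ge r.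
set K := log2 (k%:R : R); set L := log2 (q%:R : R); set l := ln (2 : R).
have [exp_half exp_tail] := tail_exponents_le (l := l)
  (ltac:(by rewrite ln2_gt0 ln2_le))
  (log2_ge1 R k_ge2) (log2_ge1 R q_ge2) eta_ge.
have twoE : 2 = expR l by rewrite lnK // posrE.
have kE : k%:R = expR (K * l) by rewrite -natr_expR_log2 // (leq_trans _ k_ge2).
have qkE : (q * k)%:R = expR (l * (L + K)).
  rewrite natrM kE natr_expR_log2 ?(leq_trans _ q_ge2) // -expRD.
  by congr expR; rewrite /L /l; ring.
split.
  have -> : (1 / 2 : R) = expR (- l) by rewrite expRN -twoE div1r.
  by rewrite qkE -expRD ler_expR.
have -> : 2 * (2 * (q * k)%:R ^+ 2 * r)
    = expR ((l + l * (L + K)) * 2 - eta * (K * L) / 6).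
  by rewrite expRD expRM_natr expRD -twoE -qkE /r; ring.
have -> : powR 2 (- (19/100 * eta - 110) * K) * k%:R ^- 101
    = expR (- (19/100 * eta - 110) * K * l - K * l * 101).
  by rewrite expRD expRN expRM_natr -kE /powR gt_eqF.
by rewrite ler_expR.
Qed.

Theorem claim4p3 (R : realType) (F : finFieldType) (n k b : nat)
    (eps eta : R) (C : {vspace 'rV[F]_n}) :
  (2 <= k)%N -> 0 < eps < 1 -> 600 <= eta ->
  \dim C = k ->
  (1 <= b)%N ->
  (forall c : 'rV[F]_n, c \in C -> c != 0 -> (b <= wt c)%N) ->
  (forall alpha : nat, (1 <= alpha)%N ->
     (#|[set c : 'rV[F]_n | (c \in C) && (wt c <= alpha * b)%N]|
        <= (#|F| * k) ^ alpha)%N) ->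
  let p := eta * log2 (k%:R : R) * log2 (#|F|%:R : R) / (b%:R * eps ^+ 2) in
  p <= 1 ->
  1 - powR 2 (- ((19 / 100) * eta - 110) * log2 (k%:R : R)) * (k%:R : R) ^- 101
  <= sample_prob p (fun S : {set 'I_n} =>
       [forall c : 'rV[F]_n, (c \in C) ==>
          (((1 - eps) * (wt c)%:R <= (wt_on S c)%:R / p)
           && ((wt_on S c)%:R / p <= (1 + eps) * (wt c)%:R))]).
Proof.
move=> k_ge2 /andP[eps_gt0 eps_lt1] eta_ge _ b_gt0 min_wt count_le p p_le1.
have q_ge2 : (2 <= #|F|)%N := card_finNzRing_gt1 F.
have [qk_r_le tail_le] := code_tail_le q_ge2 k_ge2 eta_ge.
have K_ge1 := log2_ge1 R k_ge2; have L_ge1 := log2_ge1 R q_ge2.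
have b_pos : (0 : R) < b%:R by rewrite ltr0n.
have rE : p * eps ^+ 2 / 6 * b%:R = eta * (log2 (k%:R : R) * log2 (#|F|%:R : R)) / 6.
  by rewrite /p; field; rewrite !gt_eqF.
have p_gt0 : 0 < p.
  apply: divr_gt0; last by rewrite mulr_gt0 ?exprn_gt0.
  by apply: mulr_gt0; [apply: mulr_gt0|]; lra.
rewrite -rE in qk_r_le tail_le.
rewrite (sample_probC p) lerD2l lerN2.
apply: (le_trans (sample_prob_code_deviation p_gt0 p_le1 (P := mem C) _ min_wt)).
  by rewrite !ltW.
apply: le_trans tail_le; rewrite -big_distrr /= ler_pM2l //.
apply: (le_trans _ (sum_expr_level_le b_gt0 (expR_ge0 _) qk_r_le count_le)).
apply: ler_sum => c _; rewrite (_ : p * _ * _ / 6 = p * eps ^+ 2 / 6 * (wt c)%:R).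
  by apply: expRN_le_expr_div; have := mulr_gt0 p_gt0 (exprn_gt0 2 eps_gt0); lra.
by ring.
Qed.
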